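(* Let $I\subseteq\mathbb{R}$ be a nonempty open interval, let $f:I\to\mathbb{R}$ be Wright convex, and let $g:I\to\mathbb{R}$ be a convex function with $g|_{I\cap\mathbb{Q}}=f|_{I\cap\mathbb{Q}}$. Then for all $u,v>0$ and all $x\in I$ with $x+u+v\in I$, $$f(x+u+v)-f(x+u)-f(x+v)+f(x)=g(x+u+v)-g(x+u)-g(x+v)+g(x).$$
   Context: A function $f:I\to\mathbb{R}$ on an interval $I$ is called Wright convex if $f(tx+(1-t)y)+f((1-t)x+ty)\leq f(x)+f(y)$ for all $x,y\in I$ and $t\in[0,1]$. *)

From Stdlib Require Import Reals QArith Qreals Lra.
Open Scope R_scope.

Definition is_interval (I : R -> Prop) : Prop :=
  forall x y z, I x -> I y -> x <= z <= y -> I z.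

Definition is_open_set (I : R -> Prop) : Prop :=
  forall x, I x -> exists e, 0 < e /\ forall y, Rabs (y - x) < e -> I y.

Definition nonempty_open_interval (I : R -> Prop) : Prop :=
  is_interval I /\ is_open_set I /\ exists x, I x.

Definition wright_convex_on (I : R -> Prop) (f : R -> R) : Prop :=
  forall x y t, I x -> I y -> 0 <= t <= 1 ->
    f (t * x + (1 - t) * y) + f ((1 - t) * x + t * y) <= f x + f y.

Definition convex_on (I : R -> Prop) (g : R -> R) : Prop :=
  forall x y t, I x -> I y -> 0 <= t <= 1 ->
    g (t * x + (1 - t) * y) <= t * g x + (1 - t) * g y.

Definition is_rational (x : R) : Prop := exists q : Q, Q2R q = x.

From Stdlib Require Import Reals QArith Qreals Lra.
Open Scope R_scope.

(* Wright convexity of f makes every increment s |-> f (s + v) - f s (v >= 0)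
   nondecreasing, while the convex function g is continuous, so that
   s |-> g (s + v) - g s is continuous.  If the difference of a nondecreasing
   and a continuous function is constant on a dense set, it is squeezed to
   that constant everywhere.  Applied with a rational v, where the two
   increments agree on the rationals, this makes f - g invariant under rational
   translations; applied with an arbitrary v on the dense set x + u + Q, it
   shows that the increment of f - g at x equals the one at x + u. *)

Definition dense (P : R -> Prop) : Prop :=
  forall lo hi, lo < hi -> exists s, lo < s < hi /\ P s.

Lemma dense_rational : dense is_rational.
Proof.
  intros lo hi Hlt.
  set (n := up (/ (hi - lo))).
  destruct (archimed (/ (hi - lo))) as [Hn _]; fold n in Hn.
  assert (Hn0 : 0 < IZR n).
  { assert (0 < / (hi - lo)) by (apply Rinv_0_lt_compat; lra). lra. }
  assert (Hwide : 1 < (hi - lo) * IZR n).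
  { replace 1 with ((hi - lo) * / (hi - lo)) by (field; lra).
    apply Rmult_lt_compat_l; lra. }
  set (m := up (lo * IZR n)).
  destruct (archimed (lo * IZR n)) as [Hm1 Hm2]; fold m in Hm1, Hm2.
  exists (IZR m / IZR n). split.
  - split; apply (Rmult_lt_reg_r (IZR n)); try lra;
      unfold Rdiv; rewrite Rmult_assoc, Rinv_l, Rmult_1_r by lra; lra.
  - exists (Qmake m (Z.to_pos n)). unfold Q2R; simpl.
    rewrite Z2Pos.id by (apply lt_IZR; exact Hn0). reflexivity.
Qed.

Lemma is_rational_plus (x y : R) :
  is_rational x -> is_rational y -> is_rational (x + y).
Proof. intros [p <-] [q <-]. exists (p + q)%Q. apply Q2R_plus. Qed.

Lemma is_rational_opp (x : R) : is_rational x -> is_rational (- x).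
Proof. intros [p <-]. exists (- p)%Q. apply Q2R_opp. Qed.

Lemma dense_rational_shift (b : R) : dense (fun s => is_rational (s - b)).
Proof.
  intros lo hi Hlt.
  destruct (dense_rational (lo - b) (hi - b)) as [q [Hq Qq]]; [lra |].
  exists (b + q). split; [lra |].
  replace (b + q - b) with q by ring. exact Qq.
Qed.

Lemma convex_on_combination (I : R -> Prop) (g : R -> R) (x y p q : R) :
  convex_on I g -> I x -> I y -> 0 <= p -> 0 <= q -> 0 < p + q ->
  (p + q) * g ((p * x + q * y) / (p + q)) <= p * g x + q * g y.
Proof.
  intros Hg Ix Iy Hp Hq Hpq.
  assert (Ht : 0 <= p / (p + q) <= 1).
  { split; apply (Rmult_le_reg_r (p + q)); try lra;
      unfold Rdiv; rewrite Rmult_assoc, Rinv_l, Rmult_1_r by lra; lra. }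
  assert (Hc := Hg x y (p / (p + q)) Ix Iy Ht).
  replace (p / (p + q) * x + (1 - p / (p + q)) * y) with ((p * x + q * y) / (p + q))
    in Hc by (field; lra).
  replace (p * g x + q * g y)
    with ((p + q) * (p / (p + q) * g x + (1 - p / (p + q)) * g y)) by (field; lra).
  apply Rmult_le_compat_l; lra.
Qed.

Lemma convex_on_opp (I : R -> Prop) (g : R -> R) :
  convex_on I g -> convex_on (fun y => I (- y)) (fun y => g (- y)).
Proof.
  intros Hg x y t Ix Iy Ht.
  replace (- (t * x + (1 - t) * y)) with (t * - x + (1 - t) * - y) by ring.
  exact (Hg (- x) (- y) t Ix Iy Ht).
Qed.

Lemma convex_on_right_bound (I : R -> Prop) (g : R -> R) (a e s : R) :
  convex_on I g -> 0 < e -> (forall y, a - e <= y <= a + e -> I y) ->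
  a <= s <= a + e ->
  e * Rabs (g s - g a) <= (s - a) * (Rabs (g (a + e) - g a) + Rabs (g (a - e) - g a)).
Proof.
  intros Hg He Hball Hs.
  assert (Ia : I a) by (apply Hball; lra).
  assert (Iae : I (a + e)) by (apply Hball; lra).
  assert (Iame : I (a - e)) by (apply Hball; lra).
  assert (Is : I s) by (apply Hball; lra).
  assert (Hup := convex_on_combination I g (a + e) a (s - a) (a + e - s)
                   Hg Iae Ia ltac:(lra) ltac:(lra) ltac:(lra)).
  replace (((s - a) * (a + e) + (a + e - s) * a) / (s - a + (a + e - s))) with s
    in Hup by (field; lra).
  assert (Hlow := convex_on_combination I g (a - e) s (s - a) e
                    Hg Iame Is ltac:(lra) ltac:(lra) ltac:(lra)).
  replace (((s - a) * (a - e) + e * s) / (s - a + e)) with a in Hlow by (field; lra).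
  assert (A1 : (s - a) * (g (a + e) - g a) <= (s - a) * Rabs (g (a + e) - g a))
    by (apply Rmult_le_compat_l; [lra | apply Rle_abs]).
  assert (A2 : (s - a) * (g (a - e) - g a) <= (s - a) * Rabs (g (a - e) - g a))
    by (apply Rmult_le_compat_l; [lra | apply Rle_abs]).
  assert (P1 : 0 <= (s - a) * Rabs (g (a + e) - g a))
    by (apply Rmult_le_pos; [lra | apply Rabs_pos]).
  assert (P2 : 0 <= (s - a) * Rabs (g (a - e) - g a))
    by (apply Rmult_le_pos; [lra | apply Rabs_pos]).
  destruct (Rcase_abs (g s - g a)) as [Hneg | Hnonneg].
  - rewrite Rabs_left by exact Hneg. nra.
  - rewrite Rabs_right by exact Hnonneg. nra.
Qed.

Lemma convex_on_local_bound (I : R -> Prop) (g : R -> R) (a e s : R) :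
  convex_on I g -> 0 < e -> (forall y, a - e <= y <= a + e -> I y) ->
  Rabs (s - a) <= e ->
  e * Rabs (g s - g a)
    <= Rabs (s - a) * (Rabs (g (a + e) - g a) + Rabs (g (a - e) - g a)).
Proof.
  intros Hg He Hball Hs.
  destruct (Rle_or_lt a s) as [Has | Hsa].
  - rewrite (Rabs_right (s - a)) in Hs |- * by lra.
    apply convex_on_right_bound with I; auto; lra.
  - rewrite (Rabs_left (s - a)) in Hs |- * by lra.
    assert (Hopp := convex_on_right_bound (fun y => I (- y)) (fun y => g (- y))
                      (- a) e (- s) (convex_on_opp I g Hg) He).
    cbv beta in Hopp. rewrite !Ropp_involutive in Hopp.
    replace (- (- a + e)) with (a - e) in Hopp by ring.
    replace (- (- a - e)) with (a + e) in Hopp by ring.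
    rewrite Rplus_comm.
    replace (- (s - a)) with (- s - - a) by ring.
    apply Hopp; [intros y Hy; apply Hball |]; lra.
Qed.

Lemma convex_on_continuity_pt (I : R -> Prop) (g : R -> R) (a : R) :
  is_open_set I -> convex_on I g -> I a -> continuity_pt g a.
Proof.
  intros Ho Hg Ia.
  destruct (Ho a Ia) as [e0 [He0 Hball]].
  set (e := e0 / 2).
  assert (He : 0 < e) by (unfold e; lra).
  set (M := Rabs (g (a + e) - g a) + Rabs (g (a - e) - g a)).
  assert (HM : 0 <= M) by (unfold M; assert (H1 := Rabs_pos (g (a + e) - g a));
                           assert (H2 := Rabs_pos (g (a - e) - g a)); lra).
  assert (Hbound : forall s, Rabs (s - a) <= e -> e * Rabs (g s - g a) <= Rabs (s - a) * M).
  { intros s Hs. apply convex_on_local_bound with I; auto.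
    intros y Hy. apply Hball, Rabs_def1; unfold e in *; lra. }
  unfold continuity_pt, continue_in, limit1_in, limit_in; simpl; unfold R_dist.
  intros eps Heps.
  set (delta := eps * e / (M + 1)).
  assert (Hdelta : 0 < delta) by (unfold delta; apply Rdiv_lt_0_compat; nra).
  exists (Rmin e delta). split; [apply Rmin_pos; lra |].
  intros s [_ Hs].
  assert (Hse := Rmin_l e delta). assert (Hsd := Rmin_r e delta).
  assert (Hs_pos := Rabs_pos (s - a)).
  assert (Hsmall : Rabs (s - a) * (M + 1) < eps * e).
  { replace (eps * e) with (delta * (M + 1)) by (unfold delta; field; lra).
    apply Rmult_lt_compat_r; lra. }
  assert (Hgs := Hbound s ltac:(lra)).
  apply (Rmult_lt_reg_l e); nra.
Qed.

Lemma wright_convex_on_increment_le (I : R -> Prop) (f : R -> R) (x y v : R) :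
  wright_convex_on I f -> I x -> I (y + v) -> x <= y -> 0 <= v ->
  f (x + v) - f x <= f (y + v) - f y.
Proof.
  intros Hw Ix Iyv Hxy Hv.
  destruct (Req_dec (y - x + v) 0) as [Hdeg | Hnondeg].
  { replace y with x by lra. lra. }
  set (t := v / (y - x + v)).
  assert (Ht : 0 <= t <= 1).
  { unfold t; split; apply (Rmult_le_reg_r (y - x + v)); try lra;
      unfold Rdiv; rewrite Rmult_assoc, Rinv_l, Rmult_1_r by lra; lra. }
  assert (W := Hw x (y + v) t Ix Iyv Ht).
  replace (t * x + (1 - t) * (y + v)) with y in W by (unfold t; field; lra).
  replace ((1 - t) * x + t * (y + v)) with (x + v) in W by (unfold t; field; lra).
  lra.
Qed.

Lemma nondecreasing_sub_continuous_eq (phi psi : R -> R) (P : R -> Prop) (a c d : R) :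
  dense P -> 0 < d -> continuity_pt psi a ->
  (forall s t, a - d < s -> s <= t -> t < a + d -> phi s <= phi t) ->
  (forall s, a - d < s < a + d -> P s -> phi s - psi s = c) ->
  phi a - psi a = c.
Proof.
  intros HP Hd Hpsi Hphi Hc.
  assert (Hsqueeze : forall eps, 0 < eps -> c - eps <= phi a - psi a <= c + eps).
  { intros eps Heps.
    unfold continuity_pt, continue_in, limit1_in, limit_in in Hpsi; simpl in Hpsi.
    destruct (Hpsi eps Heps) as [delta [Hdelta Hnear]].
    assert (Hr : 0 < Rmin delta d) by (apply Rmin_pos; lra).
    assert (Hrd := Rmin_l delta d). assert (Hrd' := Rmin_r delta d).
    set (r := Rmin delta d) in *.
    destruct (HP (a - r) a) as [s1 [Hs1 Ps1]]; [lra |].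
    destruct (HP a (a + r)) as [s2 [Hs2 Ps2]]; [lra |].
    assert (N1 : Rabs (psi s1 - psi a) < eps).
    { apply Hnear. split; [split; [exact I | lra] | apply Rabs_def1; lra]. }
    assert (N2 : Rabs (psi s2 - psi a) < eps).
    { apply Hnear. split; [split; [exact I | lra] | apply Rabs_def1; lra]. }
    apply Rabs_def2 in N1. apply Rabs_def2 in N2.
    assert (E1 := Hc s1 ltac:(lra) Ps1). assert (E2 := Hc s2 ltac:(lra) Ps2).
    assert (M1 := Hphi s1 a ltac:(lra) ltac:(lra) ltac:(lra)).
    assert (M2 := Hphi a s2 ltac:(lra) ltac:(lra) ltac:(lra)).
    lra. }
  apply Rle_antisym; apply Rle_plus_epsilon; intros eps Heps;
    destruct (Hsqueeze eps Heps); lra.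
Qed.

Lemma increment_diff_eq_of_dense (I : R -> Prop) (f g : R -> R) (P : R -> Prop) (v a c : R) :
  is_open_set I -> wright_convex_on I f -> convex_on I g -> dense P -> 0 <= v ->
  I a -> I (a + v) ->
  (forall s, I s -> I (s + v) -> P s -> f (s + v) - f s - (g (s + v) - g s) = c) ->
  f (a + v) - f a - (g (a + v) - g a) = c.
Proof.
  intros Ho Hw Hg HP Hv Ia Iav Hc.
  destruct (Ho a Ia) as [e1 [He1 B1]].
  destruct (Ho (a + v) Iav) as [e2 [He2 B2]].
  assert (Hd1 := Rmin_l e1 e2). assert (Hd2 := Rmin_r e1 e2).
  set (d := Rmin e1 e2) in *.
  assert (Hnbhd : forall s, a - d < s < a + d -> I s /\ I (s + v)).
  { intros s Hs. split; [apply B1 | apply B2]; apply Rabs_def1; lra. }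
  apply (nondecreasing_sub_continuous_eq (fun s => f (s + v) - f s)
           (fun s => g (s + v) - g s) P a c d HP).
  - apply Rmin_pos; lra.
  - apply continuity_pt_minus; [| exact (convex_on_continuity_pt I g a Ho Hg Ia)].
    apply (continuity_pt_comp (fun s => s + v) g); [reg |].
    exact (convex_on_continuity_pt I g (a + v) Ho Hg Iav).
  - intros s t Hs Hst Ht.
    apply wright_convex_on_increment_le with I; auto.
    + apply (Hnbhd s); lra.
    + apply (Hnbhd t); lra.
  - intros s Hs Ps. destruct (Hnbhd s Hs). auto.
Qed.

Lemma wright_sub_convex_rational_translation (I : R -> Prop) (f g : R -> R) :
  is_open_set I -> wright_convex_on I f -> convex_on I g ->
  (forall x, I x -> is_rational x -> g x = f x) ->
  forall y z, I y -> I z -> is_rational (z - y) -> f z - g z = f y - g y.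
Proof.
  intros Ho Hw Hg Hfg.
  assert (Hle : forall y z, y <= z -> I y -> I z -> is_rational (z - y) ->
                  f z - g z = f y - g y).
  { intros y z Hyz Iy Iz Qv.
    set (v := z - y) in Qv.
    replace z with (y + v) in Iz |- * by (unfold v; ring).
    enough (f (y + v) - f y - (g (y + v) - g y) = 0) by lra.
    apply increment_diff_eq_of_dense with I is_rational;
      auto using dense_rational; [unfold v; lra |].
    intros s Is Isv Qs.
    rewrite (Hfg s Is Qs), (Hfg (s + v) Isv (is_rational_plus s v Qs Qv)).
    ring. }
  intros y z Iy Iz Qzy.
  destruct (Rle_or_lt y z) as [Hyz | Hzy].
  - apply Hle; auto.
  - symmetry. apply Hle; auto; [lra |].
    replace (y - z) with (- (z - y)) by ring. apply is_rational_opp, Qzy.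
Qed.

Theorem mainTheorem5 (I : R -> Prop) (f g : R -> R) :
  nonempty_open_interval I ->
  wright_convex_on I f ->
  convex_on I g ->
  (forall x, I x -> is_rational x -> g x = f x) ->
  forall u v x, 0 < u -> 0 < v -> I x -> I (x + u + v) ->
    f (x + u + v) - f (x + u) - f (x + v) + f x
    = g (x + u + v) - g (x + u) - g (x + v) + g x.
Proof.
  intros [Hint [Ho _]] Hw Hg Hfg u v x Hu Hv Ix Ixuv.
  assert (Ixu : I (x + u)) by (apply (Hint x (x + u + v)); auto; lra).
  assert (Ixv : I (x + v)) by (apply (Hint x (x + u + v)); auto; lra).
  assert (Htrans := wright_sub_convex_rational_translation I f g Ho Hw Hg Hfg).
  enough (f (x + v) - f x - (g (x + v) - g x)
          = f (x + u + v) - f (x + u) - (g (x + u + v) - g (x + u))) by lra.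
  apply increment_diff_eq_of_dense with I (fun s => is_rational (s - (x + u)));
    auto using dense_rational_shift; [lra |].
  intros s Is Isv Qs.
  assert (T1 := Htrans (x + u) s Ixu Is Qs).
  assert (T2 := Htrans (x + u + v) (s + v) Ixuv Isv
                  ltac:(replace (s + v - (x + u + v)) with (s - (x + u)) by ring; exact Qs)).
  lra.
Qed.
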